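(* Assume (F1) and (H1). Then every solution $(c,\varphi)$ of the travelling wave problem satisfies $0<\varphi(\xi)<K$ for all $\xi\in\mathbb{R}$.
   Context: Fix constants $d>0$, $\tau\geq0$, $K>0$, $f:[0,K]^2\to\mathbb{R}$ and $h:\mathbb{R}\to\mathbb{R}$ (partial derivatives of $f$ assumed to exist). (F1) $f\in C([0,K]^2,\mathbb{R})$, $f(0,0)=f(K,K)=0$, $f(u,u)>0$ for $u\in(0,K)$, $\partial_2f(u,v)\geq0$ on $[0,K]^2$. (H1) $h\ge0$, even, integrable, $\int_{\mathbb{R}}h=1$. Notation: $\Delta_1\varphi(\xi)=\varphi(\xi+1)-2\varphi(\xi)+\varphi(\xi-1)$, $(h*\varphi)(\xi)=\int_{\mathbb{R}}h(y)\varphi(\xi-y)dy$. A solution $(c,\varphi)$ of the travelling wave problem consists of $c>0$ and a differentiable $\varphi:\mathbb{R}\to\mathbb{R}$ with $-c\varphi'(\xi)+d\Delta_1\varphi(\xi)+f(\varphi(\xi),(h*\varphi)(\xi-c\tau))=0$ for all $\xi$, $\lim_{\xi\to-\infty}\varphi(\xi)=0$, $\lim_{\xi\to\infty}\varphi(\xi)=K$, and $0\le\varphi\le K$ on $\mathbb{R}$. *)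

From HB Require Import structures.
From mathcomp Require Import all_boot all_order all_algebra.
From mathcomp Require Import all_classical all_reals all_analysis.
Set Implicit Arguments. Unset Strict Implicit. Unset Printing Implicit Defensive.
Import Order.TTheory GRing.Theory Num.Theory.
Import numFieldNormedType.Exports.
Local Open Scope classical_set_scope.
Local Open Scope ring_scope.

Definition conv {R : realType} (h phi : R -> R) (xi : R) : R :=
  fine (\int[lebesgue_measure]_(y in [set: R]) (h y * phi (xi - y))%:E)%E.

Definition Delta1 {R : realType} (phi : R -> R) (xi : R) : R :=
  phi (xi + 1) - 2 * phi xi + phi (xi - 1).

Definition F1 {R : realType} (K : R) (f : R -> R -> R) : Prop :=
  {within [set p : R * R | 0 <= p.1 <= K /\ 0 <= p.2 <= K],
     continuous (fun p : R * R => f p.1 p.2)} /\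
  f 0 0 = 0 /\ f K K = 0 /\
  (forall u, 0 < u < K -> 0 < f u u) /\
  (forall u v, 0 <= u <= K -> 0 < v < K ->
     derivable (f u) v 1 /\ 0 <= 'D_1 (f u) v).

Definition H1 {R : realType} (h : R -> R) : Prop :=
  (forall x, 0 <= h x) /\ (forall x, h (- x) = h x) /\
  measurable_fun [set: R] h /\
  lebesgue_measure.-integrable [set: R] (fun x => (h x)%:E) /\
  (\int[lebesgue_measure]_(x in [set: R]) (h x)%:E = 1%:E)%E.

Definition tw_solution {R : realType} (d tau K : R) (f : R -> R -> R)
    (h : R -> R) (c : R) (phi : R -> R) : Prop :=
  0 < c /\
  (forall xi, derivable phi xi 1) /\
  (forall xi, - c * 'D_1 phi xi + d * Delta1 phi xi
               + f (phi xi) (conv h phi (xi - c * tau)) = 0) /\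
  phi @ -oo --> 0 /\
  phi @ +oo --> K /\
  (forall xi, 0 <= phi xi <= K).

From Pilot Require Import Defs.
From HB Require Import structures.
From mathcomp Require Import all_boot all_order all_algebra.
From mathcomp Require Import all_classical all_reals all_analysis.
From mathcomp Require Import lra.
Set Implicit Arguments. Unset Strict Implicit.
Import Order.TTheory GRing.Theory Num.Theory.
Import numFieldNormedType.Exports.
Local Open Scope classical_set_scope.
Local Open Scope ring_scope.

(* If phi(x) = 0 then x is a global minimum, so phi'(x) = 0, and the wave
   equation reduces to d (phi(x+1) + phi(x-1)) = - f(0, h*phi) <= 0, the sign
   coming from the monotonicity of f in its second argument and f(0,0) = 0.
   Hence phi vanishes at x +- 1, and by induction at x + n for every n, which
   contradicts phi(+oo) = K > 0.  The value K is excluded symmetrically,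
   propagating towards -oo. *)

Lemma within_square_continuous_slice (R : realType) (K u : R) (f : R -> R -> R) :
  {within [set p : R * R | 0 <= p.1 <= K /\ 0 <= p.2 <= K],
     continuous (fun p : R * R => f p.1 p.2)} ->
  0 <= u <= K -> {within `[0, K], continuous (f u)}.
Proof.
move=> cf hu; apply/subspace_continuousP => x /= Ix.
have Sux : 0 <= (u, x).1 <= K /\ 0 <= (u, x).2 <= K.
  by split => //=; move: Ix; rewrite in_itv.
move=> W /((subspace_continuousP _ _).1 cf (u, x) Sux) /= [[P Q] /= [Pu Qx] PQW].
apply: filterS Qx => v Qv Iv; apply: (PQW (u, v)) => //=.
by split => //=; exact: nbhs_singleton.
Qed.

Lemma F1_nondecr (R : realType) (K : R) (f : R -> R -> R) (u v w : R) :
  F1 K f -> 0 <= u <= K -> 0 <= v -> v <= w -> w <= K -> f u v <= f u w.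
Proof.
move=> [cf [_ [_ [_ df]]]] hu v0 vw wK.
apply: (@ger0_derive1_ndecr _ (f u) 0 K) => //.
- by move=> x; rewrite in_itv /= => hx; case: (df u x hu hx).
- by move=> x; rewrite in_itv /= => hx; rewrite derive1E; case: (df u x hu hx).
- exact: within_square_continuous_slice.
Qed.

Lemma conv_bounds (R : realType) (K : R) (h phi : R -> R) (xi : R) :
  H1 h -> measurable_fun [set: R] phi -> (forall x, 0 <= phi x <= K) ->
  0 <= Defs.conv h phi xi <= K.
Proof.
move=> [h0 [_ [mh [ih h1]]]] mphi phib.
have mg : measurable_fun [set: R] (fun y => h y * phi (xi - y)).
  apply: measurable_realfun.measurable_funM => //.
  apply: (measurableT_comp mphi); apply: measurable_realfun.continuous_measurable_fun.
  by move=> y; apply: cvgB; [exact: cvg_cst | exact: cvg_id].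
have I0 : (0 <= \int[lebesgue_measure]_(y in [set: R]) (h y * phi (xi - y))%:E)%E.
  by apply: integral_ge0 => y _; rewrite lee_fin mulr_ge0 //; case/andP: (phib (xi - y)).
have IK : (\int[lebesgue_measure]_(y in [set: R]) (h y * phi (xi - y))%:E <= K%:E)%E.
  apply: (@le_trans _ _ (\int[lebesgue_measure]_(y in [set: R]) ((h y)%:E * K%:E))%E).
    apply: ge0_le_integral => //.
    - by move=> y _; rewrite lee_fin mulr_ge0 //; case/andP: (phib (xi - y)).
    - exact/measurable_realfun.measurable_EFinP.
    - by apply: emeasurable_funM => //; exact/measurable_realfun.measurable_EFinP.
    - by move=> y _; rewrite -EFinM lee_fin ler_wpM2l //; case/andP: (phib (xi - y)).
  by rewrite (integralZr _ ih) // h1 mul1e.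
rewrite /Defs.conv; move: I0 IK.
by case: (\int[lebesgue_measure]_(y in [set: R]) _)%E => //= r; rewrite !lee_fin => -> ->.
Qed.

Lemma derive1_global_min (R : realType) (phi : R -> R) (x : R) :
  (forall t, derivable phi t 1) -> (forall t, phi x <= phi t) -> 'D_1 phi x = 0.
Proof.
move=> dphi minx.
have : is_derive x 1 phi 0.
  apply: (@derive1_at_min _ phi (x - 1) (x + 1) x); first lra.
  - by move=> t _; exact: dphi.
  - by rewrite in_itv /=; apply/andP; split; lra.
  - by move=> t _; exact: minx.
by move=> dx; rewrite derive_val.
Qed.

Lemma derive1_global_max (R : realType) (phi : R -> R) (x : R) :
  (forall t, derivable phi t 1) -> (forall t, phi t <= phi x) -> 'D_1 phi x = 0.
Proof.
move=> dphi maxx.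
have : is_derive x 1 phi 0.
  apply: (@derive1_at_max _ phi (x - 1) (x + 1) x); first lra.
  - by move=> t _; exact: dphi.
  - by rewrite in_itv /=; apply/andP; split; lra.
  - by move=> t _; exact: maxx.
by move=> dx; rewrite derive_val.
Qed.

Lemma shift_invariant_value_at_pinfty (R : realType) (g : R -> R) (l a x : R) :
  g @ +oo --> l -> (forall y, g y = a -> g (y + 1) = a) -> g x = a -> a = l.
Proof.
move=> gl step gx.
have ga n : g (x + n%:R) = a.
  by elim: n => [|n IH]; rewrite ?addr0 // -natr1 addrA step.
have xn_oo : (x + n%:R) @[n --> \oo] --> +oo.
  apply/cvgryPge => M; near=> n.
  rewrite -lerBlDl; near: n; exact: nbhs_infty_ger.
have : (fun n : nat => g (x + n%:R)) @ \oo --> l by apply: cvg_comp gl.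
rewrite (funext ga) => /cvg_lim <- //; by rewrite lim_cst.
Unshelve. all: by end_near.
Qed.

Section TravellingWave.
Variables (R : realType) (d tau K c : R) (f : R -> R -> R) (h phi : R -> R).
Hypotheses (hd : 0 < d) (hK : 0 < K) (hF1 : F1 K f) (hH1 : H1 h).
Hypothesis wave : tw_solution d tau K f h c phi.

Let phib : forall x, 0 <= phi x <= K.
Proof. by case: wave => [_ [_ [_ [_ [_ ?]]]]]. Qed.

Let dphi : forall x, derivable phi x 1.
Proof. by case: wave => [_ [? _]]. Qed.

Let conv_phi_bounds x : 0 <= Defs.conv h phi x <= K.
Proof.
apply: conv_bounds => //; apply: measurable_realfun.continuous_measurable_fun => y.
by apply: differentiable_continuous; apply/derivable1_diffP.
Qed.

Lemma wave_zero_propagates x : phi x = 0 -> phi (x + 1) = 0 /\ phi (x - 1) = 0.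
Proof.
move=> px; case: wave => [_ [_ [eqn _]]].
have D0 : 'D_1 phi x = 0.
  by apply: derive1_global_min => // t; rewrite px; case/andP: (phib t).
have fv : 0 <= f 0 (Defs.conv h phi (x - c * tau)).
  case: (hF1) => [_ [f00 _]]; rewrite -[X in X <= _]f00.
  by case/andP: (conv_phi_bounds (x - c * tau)) => v0 vK; apply: (F1_nondecr hF1); rewrite // ?lexx ?ltW.
have := eqn x; rewrite D0 px /Delta1 => E.
have : d * (phi (x + 1) + phi (x - 1)) <= 0 by nra.
rewrite pmulr_rle0 // => sum0.
by case/andP: (phib (x + 1)); case/andP: (phib (x - 1)); split; lra.
Qed.

Lemma wave_K_propagates x : phi x = K -> phi (x + 1) = K /\ phi (x - 1) = K.
Proof.
move=> px; case: wave => [_ [_ [eqn _]]].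
have D0 : 'D_1 phi x = 0.
  by apply: derive1_global_max => // t; rewrite px; case/andP: (phib t).
have fv : f K (Defs.conv h phi (x - c * tau)) <= 0.
  case: (hF1) => [_ [_ [fKK _]]]; rewrite -[X in _ <= X]fKK.
  by case/andP: (conv_phi_bounds (x - c * tau)) => v0 vK; apply: (F1_nondecr hF1); rewrite // ?lexx ?ltW.
have := eqn x; rewrite D0 px /Delta1 => E.
have : 0 <= d * (phi (x + 1) + phi (x - 1) - 2 * K) by nra.
rewrite pmulr_rge0 // => sumK.
by case/andP: (phib (x + 1)); case/andP: (phib (x - 1)); split; lra.
Qed.

End TravellingWave.

Theorem lemma3p1 (R : realType) (d tau K : R) (f : R -> R -> R) (h : R -> R)
    (hd : 0 < d) (htau : 0 <= tau) (hK : 0 < K)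
    (hF1 : F1 K f) (hH1 : H1 h) (c : R) (phi : R -> R) :
  tw_solution d tau K f h c phi ->
  forall xi : R, 0 < phi xi < K.
Proof.
move=> wave xi; have [_ [_ [_ [lim0 [limK phib]]]]] := wave.
have [p0 pK] := andP (phib xi).
rewrite !lt_def p0 pK !andbT; apply/andP; split; apply/eqP => pxi.
- have step y : phi y = 0 -> phi (y + 1) = 0.
    by move=> /(wave_zero_propagates hd hK hF1 hH1 wave) [].
  by have := shift_invariant_value_at_pinfty limK step pxi; lra.
- have limN0 : (fun y => phi (- y)) @ +oo --> 0 by apply: cvg_comp lim0; rewrite ninfty.
  have step y : phi (- y) = K -> phi (- (y + 1)) = K.
    by rewrite opprD => /(wave_K_propagates hd hK hF1 hH1 wave) [].
  have pNNxi : phi (- - xi) = K by rewrite opprK.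
  by have := shift_invariant_value_at_pinfty limN0 step pNNxi; lra.
Qed.
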